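(* Let $\mathbb{F}$ be a field of characteristic $2$ with at least $4$ elements, let $k\geq 1$ be an integer, and let $B\in M_{4k+2}(\mathbb{F})$ be a non-derogative matrix with characteristic polynomial $p_B(x)=x^{4k+2}+w_{4k+1}x^{4k+1}+w_{4k}x^{4k}+\dots+w_0$. Let $a\in\mathbb{F}$ with $a\neq 0,1$. (a) If $\operatorname{Trace}(B)=c\neq 0$, then there exist $N,D\in M_{4k+2}(\mathbb{F})$ with $B=N+D$, $N^2=0$, and $D$ diagonalizable with every eigenvalue in $\{0,\ c,\ ca,\ c(a+1)\}$. (b) If $\operatorname{Trace}(B)=0$ and $b\in\mathbb{F}$ satisfies $b^2=w_{4k}+a^2+a+1$ (such $b$ always exists when $\mathbb{F}$ is finite), then there exist $N,D\in M_{4k+2}(\mathbb{F})$ with $B=N+D$, $N^2=0$, and $D$ diagonalizable with every eigenvalue in $\{b,\ b+1,\ b+a,\ b+a+1\}$.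
   Context: A square matrix is non-derogative if its minimal polynomial equals its characteristic polynomial. A matrix $D\in M_n(\mathbb{F})$ is diagonalizable if there exists an invertible $U\in M_n(\mathbb{F})$ such that $U^{-1}DU$ is diagonal. *)

From HB Require Import structures.
From mathcomp Require Import all_boot all_order all_algebra.
Set Implicit Arguments. Unset Strict Implicit. Unset Printing Implicit Defensive.
Import GRing.Theory.
Local Open Scope ring_scope.

Definition non_derogative (F : fieldType) (n : nat) (A : 'M[F]_n.+1) : Prop :=
  mxminpoly A = char_poly A.

Definition diagonalizable_mx (F : fieldType) (n : nat) (D : 'M[F]_n) : Prop :=
  exists U : 'M[F]_n, U \in unitmx /\ is_diag_mx (invmx U *m D *m U).

From HB Require Import structures.
From mathcomp Require Import all_boot all_order all_algebra.
From mathcomp Require Import zify ring.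
From Stdlib Require Import Classical.
Set Implicit Arguments. Unset Strict Implicit. Unset Printing Implicit Defensive.
Import GRing.Theory.
Local Open Scope ring_scope.

(* A non-derogative B has a cyclic vector v, assembled prime power by prime
   power from the factorisation of its minimal polynomial.  For n = 2m and any
   scalars lambda_j, the polynomials phi_j = prod_(i<j) X (X - lambda_i) have
   degree 2j, so the rows v phi_j(B), v phi_j(B) B (j < m) form a basis.  As
   phi_j X X = phi_(j+1) + lambda_j phi_j X, in this basis B = [[0, 1], [G, H]]
   where every row of H but the last is diagonal with entries lambda_j, and
   H_(m,m) = tr B - sum_j lambda_j.  Then N = [[0, 0], [G, 0]] squares to zero
   and D = [[0, 1], [0, H]] is killed by X (X - H_(m,m)) prod_j (X - lambda_j).
   In characteristic 2 the lambda_j can be taken among two of the prescribed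
   eigenvalues so that this polynomial has the four prescribed simple roots. *)

Section IrreducibleFactors.
Variable F : fieldType.
Implicit Types p q r h pi : {poly F}.

Lemma irredp_dvd_exists p : (1 < size p)%N -> exists2 q, irreducible_poly q & q %| p.
Proof.
elim: {p}(size p) {-2}p (leqnn (size p)) => [|s IHs] p sp p_gt1.
  by rewrite ltnNge (leq_trans sp) in p_gt1.
have [p_irr|p_red] := classic (irreducible_poly p); first by exists p.
have [q [q_neq1 qp q_neqp]] : exists q, [/\ size q != 1%N, q %| p & ~~ (q %= p)].
  apply: NNPP => no_q; apply: p_red; split => // q sq qp.
  by apply: NNPP => /negP nq; apply: no_q; exists q.
have p0 : p != 0 by rewrite -size_poly_gt0 (ltn_trans _ p_gt1).
have q0 : q != 0 by apply: contraNneq p0 => q0; rewrite -dvd0p -q0.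
have q_lt : (size q < size p)%N by rewrite ltn_neqAle dvdp_leq // andbT dvdp_size_eqp.
have q_gt1 : (1 < size q)%N by rewrite ltn_neqAle eq_sym q_neq1 size_poly_gt0.
have [r r_irr rq] := IHs q (leq_trans q_lt sp) q_gt1.
by exists r => //; apply: dvdp_trans rq qp.
Qed.

Lemma irredp_pexp_decomp pi h : irreducible_poly pi -> h != 0 ->
  exists e r, h = r * pi ^+ e /\ ~~ (pi %| r).
Proof.
move=> pi_irr; have [pi_gt1 _] := pi_irr; have pi0 := irredp_neq0 pi_irr.
elim: {h}(size h) {-2}h (leqnn (size h)) => [|s IHs] h sh h0.
  by move: h0; rewrite -size_poly_eq0 -leqn0 sh.
have [pih|npih] := boolP (pi %| h); last by exists 0%N, h; rewrite expr0 mulr1.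
set q := h %/ pi; have hE : h = q * pi by rewrite divpK.
have q0 : q != 0 by apply: contraNneq h0 => q0; rewrite hE q0 mul0r.
have sq : (size q <= s)%N.
  rewrite size_divp // leq_subLR (leq_trans sh) //.
  by rewrite -[X in (X < _)%N]add0n ltn_add2r -subn1 subn_gt0.
have [e [r [qE npir]]] := IHs q sq q0.
by exists e.+1, r; rewrite exprSr mulrA -qE -hE.
Qed.

End IrreducibleFactors.

Section CyclicVector.
Variables (F : fieldType) (n : nat) (A : 'M[F]_n.+1).
Implicit Types (v w : 'rV[F]_n.+1) (p q g h pi : {poly F}).

Definition rV_annihilator v p := forall g, (v *m horner_mx A g == 0) = (p %| g).

Definition cyclic_vector v :=
  forall g, (size g <= n.+1)%N -> v *m horner_mx A g = 0 -> g = 0.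

Lemma mulmx_hornerM v p q :
  v *m horner_mx A (p * q) = v *m horner_mx A p *m horner_mx A q.
Proof. by rewrite rmorphM mulmxA. Qed.

Lemma mulmx_horner_dvdp v p g :
  v *m horner_mx A p = 0 -> p %| g -> v *m horner_mx A g = 0.
Proof. by move=> vp /dvdpP [r ->]; rewrite mulrC mulmx_hornerM vp mul0mx. Qed.

Lemma mulmx_horner_coprime v p q : coprimep p q ->
  v *m horner_mx A p = 0 -> v *m horner_mx A q = 0 -> v = 0.
Proof.
move=> /Bezout_eq1_coprimepP [[u1 u2] /= Bez] vp vq.
have -> : v = v *m horner_mx A (u1 * p + u2 * q) by rewrite Bez rmorph1 mulmx1.
rewrite rmorphD mulmxDr.
by rewrite !(mulmx_horner_dvdp _ (dvdp_mull _ (dvdpp _))) ?addr0.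
Qed.

Lemma rV_annihilatorM v w p q : coprimep p q ->
  rV_annihilator v p -> rV_annihilator w q -> rV_annihilator (v + w) (p * q).
Proof.
move=> cpq vp wq g; rewrite Gauss_dvdp //.
have ann u r s : rV_annihilator u r -> r %| s -> u *m horner_mx A s = 0.
  by move=> ur rs; apply/eqP; rewrite ur.
apply/eqP/andP => [vwg | [pg qg]]; last by rewrite mulmxDl (ann _ p) // (ann _ q) ?addr0.
have vgq : v *m horner_mx A (g * q) = 0.
  move/(congr1 (mulmx^~ (horner_mx A q))): vwg.
  by rewrite /= !mulmxDl -!mulmx_hornerM mul0mx (ann w q) ?dvdp_mull // addr0.
have wgp : w *m horner_mx A (g * p) = 0.
  move/(congr1 (mulmx^~ (horner_mx A p))): vwg.
  by rewrite /= !mulmxDl -!mulmx_hornerM mul0mx (ann v p) ?dvdp_mull // add0r.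
have cqp : coprimep q p by rewrite coprimep_sym.
by move/eqP: vgq; move/eqP: wgp; rewrite vp wq !Gauss_dvdpl // => -> ->.
Qed.

Lemma mxminpoly_neq0 : mxminpoly A != 0.
Proof. exact: monic_neq0 (mxminpoly_monic A). Qed.

Lemma rV_annihilator_pexp pi e : irreducible_poly pi -> pi ^+ e %| mxminpoly A ->
  exists v, rV_annihilator v (pi ^+ e).
Proof.
move=> pi_irr; have [pi_gt1 _] := pi_irr; have pi0 := irredp_neq0 pi_irr.
case: e => [_|e pie]; first by exists 0 => g; rewrite mul0mx eqxx expr0 dvd1p.
set q := mxminpoly A %/ pi ^+ e.+1.
have Aq : mxminpoly A = q * pi ^+ e.+1 by rewrite divpK.
have q0 : q != 0 by apply: contraNneq mxminpoly_neq0 => q0; rewrite Aq q0 mul0r.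
have Aq0 (u : 'rV_n.+1) s : u *m horner_mx A (q * (s * pi ^+ e.+1)) = 0.
  apply: (mulmx_horner_dvdp (p := mxminpoly A)); first by rewrite mx_root_minpoly mulmx0.
  by rewrite Aq mulrCA dvdp_mull.
have [x xw] : exists x : 'rV_n.+1, x *m horner_mx A (q * pi ^+ e) != 0.
  have : horner_mx A (q * pi ^+ e) != 0.
    apply: contraTneq isT => /mxminpoly_min; rewrite Aq dvdp_mul2l // dvdp_Pexp2l //.
    by rewrite ltnn.
  case/matrix0Pn => i [j Mij]; exists (delta_mx 0 i).
  by apply/matrix0Pn; exists 0, j; rewrite -rowE mxE.
exists (x *m horner_mx A q) => g; apply/eqP/idP => [vg | /dvdpP [r ->]]; last first.
  by rewrite -mulmx_hornerM Aq0.
suff pij j : (j <= e.+1)%N -> pi ^+ j %| g by apply: pij.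
elim: j => [|j IHj] je; first by rewrite expr0 dvd1p.
have /dvdpP [g' gE] := IHj (ltnW je).
rewrite gE exprSr [g' * _]mulrC dvdp_mul2l ?expf_neq0 //.
apply: contraNT xw => npig'.
have cop : coprimep (pi ^+ (e.+1 - j)) g'.
  by rewrite coprimep_pexpl ?subn_gt0 // irreducible_poly_coprime.
set y := x *m horner_mx A (q * pi ^+ j).
have y0 : y = 0.
  apply: (mulmx_horner_coprime cop).
    by rewrite -mulmx_hornerM -mulrA -exprD subnKC 1?ltnW // -[pi ^+ _]mul1r Aq0.
  by rewrite -mulmx_hornerM -mulrA [pi ^+ j * _]mulrC -gE mulmx_hornerM vg.
by rewrite -(subnKC (_ : j <= e)%N) // exprD mulrA mulmx_hornerM -/y y0 mul0mx.
Qed.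

Lemma rV_annihilator_dvd h : h %| mxminpoly A -> exists v, rV_annihilator v h.
Proof.
elim: {h}(size h) {-2}h (leqnn (size h)) => [|s IHs] h sh hA.
  by move: sh hA; rewrite leqn0 size_poly_eq0 => /eqP ->; rewrite dvd0p (negPf mxminpoly_neq0).
have h0 : h != 0 by apply: contraTneq hA => ->; rewrite dvd0p mxminpoly_neq0.
have [h_le1|h_gt1] := leqP (size h) 1.
  exists 0 => g; rewrite mul0mx eqxx; apply/esym/(dvdp_trans _ (dvd1p g)).
  by rewrite dvdp1 eqn_leq h_le1 size_poly_gt0.
have [pi pi_irr pih] := irredp_dvd_exists h_gt1.
have [e [r [hE npir]]] := irredp_pexp_decomp pi_irr h0.
have e_gt0 : (0 < e)%N by case: e hE => // hE; move: npir; rewrite -(mulr1 r) -hE pih.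
have /andP [r0 pie0] : (r != 0) && (pi ^+ e != 0) by rewrite -negb_or -mulf_eq0 -hE.
have pie_gt1 : (1 < size (pi ^+ e))%N.
  by case: pi_irr => pi_gt1 _; rewrite (leq_trans pi_gt1) // dvdp_leq // dvdp_exp.
have sr : (size r <= s)%N.
  by move: sh pie_gt1; rewrite hE size_mul // -subn1; move: (size _) (size _); lia.
rewrite hE in hA |- *.
have [w wr] := IHs r sr (dvdp_trans (dvdp_mulr _ (dvdpp r)) hA).
have [u upi] := rV_annihilator_pexp pi_irr (dvdp_trans (dvdp_mull _ (dvdpp _)) hA).
exists (w + u); apply: rV_annihilatorM wr upi.
by rewrite coprimep_sym coprimep_pexpl // irreducible_poly_coprime.
Qed.

Lemma non_derogative_cyclic_vector : non_derogative A -> exists v, cyclic_vector v.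
Proof.
move=> Amin; have [v vA] := rV_annihilator_dvd (dvdpp (mxminpoly A)).
exists v => g sg /eqP; rewrite vA => /(dvdp_leq) Ag; apply/eqP.
by apply: contraTT sg => /Ag; rewrite Amin size_char_poly -ltnNge.
Qed.

Lemma horner_mx_addC b p : horner_mx (A + b%:M) p = horner_mx A (p \Po ('X + b%:P)).
Proof.
elim/poly_ind: p => [|p c IHp]; first by rewrite comp_poly0 !rmorph0.
rewrite comp_poly_MXaddC !rmorphD !rmorphM /= IHp !horner_mx_C horner_mx_X.
by rewrite rmorphD /= horner_mx_X horner_mx_C.
Qed.

Lemma sub_horner_of_size_basis v r (S : 'M_(r, n.+1)) (p : nat -> {poly F}) :
  (forall d, (d <= n)%N -> size (p d) = d.+1 /\ (v *m horner_mx A (p d) <= S)%MS) ->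
  forall g, (size g <= n.+1)%N -> (v *m horner_mx A g <= S)%MS.
Proof.
move=> pS; suff sub_s s : (s <= n.+1)%N -> forall g, (size g <= s)%N ->
    (v *m horner_mx A g <= S)%MS by exact: sub_s.
elim: s => [|s IHs] sn g sg.
  by move: sg; rewrite leqn0 size_poly_eq0 => /eqP ->; rewrite rmorph0 mulmx0 sub0mx.
have [sgs|sgs] := leqP (size g) s; first exact: IHs (ltnW sn) g sgs.
have {sg sgs} gs : size g = s.+1 by apply/eqP; rewrite eqn_leq sg.
have [ps pSs] := pS s sn.
have lp0 : lead_coef (p s) != 0 by rewrite lead_coef_eq0 -size_poly_eq0 ps.
have lpE : lead_coef (p s) = (p s)`_s by rewrite lead_coefE ps.
have lgE : lead_coef g = g`_s by rewrite lead_coefE gs.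
pose c := lead_coef g / lead_coef (p s).
rewrite -(subrK (c *: p s) g) rmorphD /= mulmxDr addmx_sub //; last first.
  by rewrite horner_mxZ -scalemxAr scalemx_sub.
apply: IHs (ltnW sn) _ _; apply/leq_sizeP => j; rewrite leq_eqVlt => /predU1P [<-|sj].
  by rewrite coefB coefZ -lgE -lpE divfK // subrr.
by rewrite coefB coefZ !nth_default ?mulr0 ?subrr // ?ps ?gs.
Qed.

Lemma cyclic_vector_row_full v r (S : 'M_(r, n.+1)) (p : nat -> {poly F}) :
  cyclic_vector v ->
  (forall d, (d <= n)%N -> size (p d) = d.+1 /\ (v *m horner_mx A (p d) <= S)%MS) ->
  row_full S.
Proof.
move=> v_cyc pS; pose K := \matrix_(i < n.+1) (v *m horner_mx A 'X^i).
have KS : (K <= S)%MS.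
  by apply/row_subP => i; rewrite rowK (sub_horner_of_size_basis pS) // size_polyXn.
have K_free : row_free K.
  apply/inj_row_free => u uK0.
  have uK : u *m K = v *m horner_mx A (rVpoly u).
    rewrite mulmx_sum_row /rVpoly poly_def rmorph_sum /= mulmx_sumr.
    by apply: eq_bigr => i _; rewrite rowK valK horner_mxZ scalemxAr.
  have /v_cyc u0 : v *m horner_mx A (rVpoly u) = 0 by rewrite -uK.
  by rewrite -[u]rVpolyK u0 ?size_poly // linear0.
by rewrite /row_full eqn_leq rank_leq_col -{1}(eqP K_free) mxrankS.
Qed.

End CyclicVector.

Lemma cyclic_vector_addC (F : fieldType) n (A : 'M[F]_n.+1) v b :
  cyclic_vector A v -> cyclic_vector (A + b%:M) v.
Proof.
move=> v_cyc g sg; rewrite horner_mx_addC => /v_cyc.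
rewrite size_comp_poly2 ?size_XaddC // => /(_ sg) /eqP.
by rewrite comp_poly2_eq0 ?size_XaddC // => /eqP.
Qed.

Section ChainBasis.
Variables (F : fieldType) (lambda : nat -> F).

Definition chain_poly j : {poly F} := \prod_(i < j) ('X * ('X - (lambda i)%:P)).

Lemma chain_polyS j :
  chain_poly j.+1 = chain_poly j * 'X * 'X - lambda j *: (chain_poly j * 'X).
Proof. by rewrite /chain_poly big_ord_recr /= -mul_polyC; ring. Qed.

Lemma size_chain_poly j : size (chain_poly j) = (2 * j).+1.
Proof.
have XXsubC0 c : 'X * ('X - c%:P) != 0 :> {poly F}.
  by rewrite mulf_neq0 ?polyX_eq0 // -size_poly_eq0 size_XsubC.
have size_XXsubC c : size ('X * ('X - c%:P) : {poly F}) = 3%N.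
  by rewrite size_mul ?polyX_eq0 ?size_polyX ?size_XsubC // -size_poly_eq0 size_XsubC.
elim: j => [|j IHj]; first by rewrite /chain_poly big_ord0 size_poly1.
rewrite /chain_poly big_ord_recr /= -/(chain_poly j) size_mul ?XXsubC0 //.
  by rewrite IHj size_XXsubC; lia.
by rewrite -size_poly_eq0 IHj.
Qed.

End ChainBasis.

Section ChainBlockForm.
Variables (F : fieldType) (lambda : nat -> F) (n l : nat).
Hypothesis hn : (l.+1 + l.+1 = n.+1)%N.
Variables (A : 'M[F]_n.+1) (v : 'rV[F]_n.+1).
Hypothesis v_cyc : cyclic_vector A v.

Let U := \matrix_(j < l.+1) (v *m horner_mx A (chain_poly lambda j)).
Let P := col_mx U (U *m A).

Let rowU j : row j U = v *m horner_mx A (chain_poly lambda j).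
Proof. by rewrite rowK. Qed.

Let rowUA j : row j (U *m A) = v *m horner_mx A (chain_poly lambda j * 'X).
Proof. by rewrite row_mul rowU rmorphM /= horner_mx_X mulmxA. Qed.

Let rowUAA (i : 'I_l.+1) : i != ord_max ->
  row i (U *m A *m A) = row (inord i.+1) U + lambda i *: row i (U *m A).
Proof.
move=> i_max; have i_lt : (i.+1 < l.+1)%N.
  by move: i_max (ltn_ord i); rewrite -val_eqE /=; lia.
rewrite row_mul !rowUA rowU inordK // chain_polyS rmorphB /= horner_mxZ mulmxBr.
by rewrite scalemxAr subrK [in RHS]rmorphM /= horner_mx_X mulmxA.
Qed.

Let chain_basis_row_full : row_full P.
Proof.
apply: (cyclic_vector_row_full (p := fun d => chain_poly lambda d./2 * 'X ^+ odd d) v_cyc).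
move=> d dn; have dE := odd_double_half d; rewrite -mul2n in dE.
have d2 : (d./2 < l.+1)%N by move: dn; rewrite -ltnS -hn; lia.
split.
  rewrite size_mul ?size_chain_poly ?size_polyXn ?expf_neq0 ?polyX_eq0 //; first lia.
  by rewrite -size_poly_eq0 size_chain_poly.
have -> : d./2 = Ordinal d2 by [].
case: (odd d); last by rewrite expr0 mulr1 -rowU -(rowKu _ U (U *m A)) row_sub.
by rewrite expr1 -rowUA -(rowKd _ U (U *m A)) row_sub.
Qed.

Lemma chain_block_form :
  exists (P : 'M_(l.+1 + l.+1, n.+1)) (Q : 'M_(n.+1, l.+1 + l.+1)) (G H : 'M_l.+1),
  [/\ P *m Q = 1%:M, Q *m P = 1%:M, P *m A = block_mx 0 1%:M G H *m P &
      forall i j : 'I_l.+1, i != ord_max -> H i j = lambda i *+ (i == j)].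
Proof.
have P_full := chain_basis_row_full.
have P_free : row_free P by rewrite /row_free (eqP P_full) hn.
have PQ := mulmxVp P_free; have QP := mulVpmx P_full.
pose R := U *m A *m A *m pinvmx P.
exists P, (pinvmx P), (lsubmx R), (rsubmx R); split => //.
  rewrite mul_col_mx mul_block_col !mul0mx mul1mx add0r -mul_row_col hsubmxK.
  by rewrite /R -[_ *m pinvmx P *m _]mulmxA QP mulmx1.
move=> i j i_max.
pose e : 'rV_(l.+1 + l.+1) :=
  delta_mx 0 (lshift _ (inord i.+1)) + lambda i *: delta_mx 0 (rshift _ i).
have rowR : row i R = e.
  rewrite /R row_mul rowUAA // -(rowKu _ U (U *m A)) -(rowKd i U (U *m A)) !rowE.
  by rewrite scalemxAl -mulmxDl -mulmxA PQ mulmx1.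
have -> : rsubmx R i j = row i R 0 (rshift _ j) by rewrite !mxE.
rewrite rowR !mxE eqxx eq_rlshift (inj_eq (@rshift_inj _ _)) add0r mulr_natr.
by rewrite eq_sym.
Qed.

End ChainBlockForm.

Section SquareZeroSplit.
Variable F : fieldType.

Lemma horner_mx_similar m n (P : 'M[F]_(m.+1, n.+1)) (Q : 'M_(n.+1, m.+1)) (M : 'M_m.+1) p :
  P *m Q = 1%:M -> Q *m P = 1%:M -> horner_mx (Q *m M *m P) p = Q *m horner_mx M p *m P.
Proof.
move=> PQ QP; elim/poly_ind: p => [|p c IHp]; first by rewrite !rmorph0 mulmx0 mul0mx.
rewrite !rmorphD !rmorphM /= !horner_mx_X !horner_mx_C IHp -!mulmxE.
rewrite mulmxDr mulmxDl -[Q *m c%:M *m P]mulmxA mul_scalar_mx -scalemxAr QP.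
by rewrite scalemx1 !mulmxA -[Q *m _ *m P *m Q]mulmxA PQ mulmx1.
Qed.

Lemma horner_mx_block_X m (H : 'M[F]_m.+1) (p : {poly F}) :
  horner_mx (block_mx 0 1%:M (0 : 'M_m.+1) H) ('X * p) =
  block_mx 0 (horner_mx H p) (0 : 'M_m.+1) (H *m horner_mx H p).
Proof.
(* horner_mx sees the size m.+1 + m.+1 as a fixpoint term, so the block lemmas
   below need their sizes given explicitly. *)
elim/poly_ind: p => [|p c IHp]; first by rewrite mulr0 !rmorph0 mulmx0 block_mx0.
rewrite mulrDr mulrA rmorphD /= [horner_mx _ ('X * p * 'X)]rmorphM /= IHp.
rewrite !rmorphD !rmorphM /= !horner_mx_X !horner_mx_C -!mulmxE.
rewrite (@mulmx_block _ m.+1 m.+1 m.+1 m.+1 m.+1 m.+1) !mulmx0 !mul0mx !addr0 !add0r.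
rewrite mul_mx_scalar (@scale_block_mx _ m.+1 m.+1 m.+1 m.+1) scaler0 scalemx1.
rewrite (@add_block_mx _ m.+1 m.+1 m.+1 m.+1) !addr0.
by rewrite mulmxDr mulmxA mul_mx_scalar.
Qed.

Lemma mulmx_horner_eigen m (H : 'M[F]_m.+1) (e : 'rV_m.+1) c p :
  e *m H = c *: e -> e *m horner_mx H p = p.[c] *: e.
Proof.
move=> eH; elim/poly_ind: p => [|p d IHp]; first by rewrite rmorph0 mulmx0 horner0 scale0r.
rewrite rmorphD rmorphM /= horner_mx_X horner_mx_C -mulmxE mulmxDr mulmxA IHp.
by rewrite -scalemxAl eH scalerA mul_mx_scalar -scalerDl hornerMXaddC.
Qed.

Lemma horner_mx_rows_diag l (H : 'M[F]_l.+1) (lambda : nat -> F) p :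
  (forall i j : 'I_l.+1, i != ord_max -> H i j = lambda i *+ (i == j)) ->
  (forall i : 'I_l.+1, i != ord_max -> root p (lambda i)) ->
  horner_mx H (('X - (H ord_max ord_max)%:P) * p) = 0.
Proof.
move=> Hdiag p_root.
have rowHp i : i != ord_max -> row i (horner_mx H p) = 0.
  move=> i_max; rewrite rowE (mulmx_horner_eigen (c := lambda i)).
    by rewrite (eqP (p_root i _)) ?scale0r.
  by apply/rowP => j; rewrite -rowE !mxE Hdiag // mulr_natr eq_sym.
rewrite rmorphM rmorphB /= horner_mx_X horner_mx_C -mulmxE; apply/row_matrixP => i.
rewrite row_mul mulmx_sum_row (bigD1 ord_max) //= big1 ?addr0 => [|k k_max]; last first.
  by rewrite rowHp // scaler0.
have [->|i_max] := eqVneq i ord_max; first by rewrite !mxE eqxx mulr1n subrr scale0r row0.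
by rewrite !mxE (Hdiag i) // (negPf i_max) !mulr0n subr0 scale0r row0.
Qed.

Lemma block_form_square_zero_split n m (A : 'M[F]_n.+1)
    (P : 'M_(m.+1 + m.+1, n.+1)) (Q : 'M_(n.+1, m.+1 + m.+1)) (G H : 'M_m.+1) p :
  P *m Q = 1%:M -> Q *m P = 1%:M -> P *m A = block_mx 0 1%:M G H *m P ->
  horner_mx H p = 0 ->
  exists N D : 'M_n.+1, [/\ A = N + D, N *m N = 0 & horner_mx D ('X * p) = 0].
Proof.
move=> PQ QP PA Hp.
exists (Q *m block_mx 0 0 G 0 *m P), (Q *m block_mx 0 1%:M 0 H *m P); split.
- rewrite -mulmxDl -mulmxDr add_block_mx !addr0 !add0r.
  by rewrite -mulmxA -PA mulmxA QP mul1mx.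
- rewrite !mulmxA -[_ *m P *m Q]mulmxA PQ mulmx1 -[Q *m _ *m _]mulmxA mulmx_block.
  by rewrite !mulmx0 !mul0mx !addr0 block_mx0 mulmx0 mul0mx.
by rewrite horner_mx_similar // horner_mx_block_X Hp mulmx0 block_mx0 mulmx0 mul0mx.
Qed.

End SquareZeroSplit.

Lemma cyclic_square_zero_split (F : fieldType) n l (hn : (l.+1 + l.+1 = n.+1)%N)
    (A : 'M[F]_n.+1) v (lambda : nat -> F) (q : {poly F}) :
  cyclic_vector A v -> (forall i, (i < l)%N -> root q (lambda i)) ->
  exists N D : 'M_n.+1, [/\ A = N + D, N *m N = 0 &
    horner_mx D ('X * (('X - (\tr A - \sum_(i < l) lambda i)%:P) * q)) = 0].
Proof.
move=> v_cyc q_root.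
have [P [Q [G [H [PQ QP PA Hdiag]]]]] := chain_block_form lambda hn v_cyc.
have trA : \tr A = \tr H.
  have -> : A = Q *m (block_mx 0 1%:M G H *m P) by rewrite -PA mulmxA QP mul1mx.
  by rewrite mxtrace_mulC -mulmxA PQ mulmx1 mxtrace_block mxtrace0 add0r.
have Hmax : H ord_max ord_max = \tr A - \sum_(i < l) lambda i.
  rewrite trA /mxtrace big_ord_recr /= (eq_bigr (fun i : 'I_l => lambda i)).
    by rewrite addrC addrK.
  move=> i _.
  by rewrite Hdiag ?eqxx ?mulr1n // -val_eqE /= neq_ltn ltn_ord.
apply: block_form_square_zero_split PQ QP PA _.
rewrite -Hmax; apply: horner_mx_rows_diag Hdiag _ => i i_max; apply: q_root.
by move: i_max (ltn_ord i); rewrite -val_eqE /=; lia.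
Qed.

Lemma diagonalizable_mx_addC (F : fieldType) n (M : 'M[F]_n.+1) (b : F) (rs : seq F) :
  uniq rs -> horner_mx M (\prod_(x <- rs) ('X - x%:P)) = 0 ->
  diagonalizable_mx (M + b%:M) /\ (forall x, eigenvalue (M + b%:M) x -> x - b \in rs).
Proof.
move=> rs_uniq M0.
have D0 : horner_mx (M + b%:M) (\prod_(x <- map (+%R b) rs) ('X - x%:P)) = 0.
  rewrite horner_mx_addC rmorph_prod big_map -{}M0 /=; congr (horner_mx M _).
  apply: eq_bigr => x _.
  by rewrite comp_polyB comp_polyX comp_polyC polyCD; ring.
have Dmin := mxminpoly_min D0; split.
  have [U U_unit UD] : diagonalizable (M + b%:M).
    apply/diagonalizableP; exists (map (+%R b) rs) => //.
    by rewrite map_inj_uniq //; apply: addrI.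
  exists (invmx U); rewrite unitmx_inv U_unit invmxK; split => //.
  by move: UD; rewrite /similar_to /conjmx pinvmxE.
move=> x; rewrite eigenvalue_root_min => /(root_dvdp Dmin).
by rewrite root_prod_XsubC => /mapP [y y_rs ->]; rewrite [b + y]addrC addrK.
Qed.

Lemma non_derogative_square_zero_split (F : fieldType) n l (hn : (l.+1 + l.+1 = n.+1)%N)
    (B : 'M[F]_n.+1) (b x1 : F) (lambda : nat -> F) (rs : seq F) :
  non_derogative B -> \tr (B - b%:M) = x1 + \sum_(i < l) lambda i ->
  uniq [:: 0, x1 & rs] -> (forall i, (i < l)%N -> lambda i \in rs) ->
  exists N D : 'M_n.+1, [/\ B = N + D, N *m N = 0, diagonalizable_mx D &
    forall x, eigenvalue D x -> x - b \in [:: 0, x1 & rs]].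
Proof.
move=> B_nd trB rs_uniq lambda_rs.
have [v v_cyc] := non_derogative_cyclic_vector B_nd.
have v_cyc' : cyclic_vector (B - b%:M) v by rewrite -raddfN; apply: cyclic_vector_addC.
have [|N [M [BNM NN M0]]] := cyclic_square_zero_split hn (lambda := lambda)
    (q := \prod_(x <- rs) ('X - x%:P)) v_cyc'.
  by move=> i il; rewrite root_prod_XsubC lambda_rs.
rewrite trB addrK in M0.
have [|D_diag D_eig] := diagonalizable_mx_addC (M := M) b rs_uniq.
  by rewrite !big_cons subr0.
exists N; exists (M + b%:M); split => //.
by rewrite addrA -BNM subrK.
Qed.

Section CharTwo.
Variables (F : fieldType) (char2 : 2%N \in [pchar F]).

Lemma mulrn_pchar2_double (x : F) m : x *+ (2 * m) = 0.
Proof. by rewrite mulrnA mulr2n addrr_pchar2 // mul0rn. Qed.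

Lemma uniq_0_1_a_aD1 (a : F) : a != 0 -> a != 1 -> uniq [:: 0; 1; a; a + 1].
Proof.
move=> a0 a1; have aD1 : a + 1 != 0 by rewrite addr_eq0 oppr_pchar2.
have eq_addr (x y : F) : (x == x + y) = (y == 0).
  by rewrite eq_sym -subr_eq0 addrAC subrr add0r.
rewrite /= !inE !negb_or -!andbA !(eq_sym 0) oner_eq0 a0 aD1 (eq_sym 1) a1.
by rewrite [a + 1 in X in 1 != X]addrC !eq_addr a0 oner_eq0.
Qed.

End CharTwo.

Theorem proposition2p11 (F : fieldType)
  (char2 : 2%N \in [pchar F])
  (card4 : exists s : seq F, uniq s /\ size s = 4%N)
  (k : nat) (hk : (1 <= k)%N)
  (B : 'M[F]_((4 * k).+2))
  (hB : non_derogative B)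
  (a : F) (ha0 : a != 0) (ha1 : a != 1) :
  (forall c : F, \tr B = c -> c != 0 ->
     exists N D : 'M[F]_((4 * k).+2),
       [/\ B = N + D, N *m N = 0, diagonalizable_mx D &
           forall x : F, eigenvalue D x -> x \in [:: 0; c; c * a; c * (a + 1)]])
  /\
  (\tr B = 0 -> forall b : F, b ^+ 2 = (char_poly B)`_(4 * k) + a ^+ 2 + a + 1 ->
     exists N D : 'M[F]_((4 * k).+2),
       [/\ B = N + D, N *m N = 0, diagonalizable_mx D &
           forall x : F, eigenvalue D x -> x \in [:: b; b + 1; b + a; b + a + 1]]).
Proof.
have hn : ((2 * k).+1 + (2 * k).+1 = (4 * k).+2)%N by lia.
have uniq01a := uniq_0_1_a_aD1 char2 ha0 ha1.
split=> [c trB c0 | trB b _].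
  have [|||N [D [BND NN D_diag D_eig]]] := non_derogative_square_zero_split hn (b := 0)
      (x1 := c) (lambda := fun=> c * a) (rs := [:: c * a; c * (a + 1)]) hB.
  - by rewrite raddf0 subr0 trB sumr_const card_ord mulrn_pchar2_double // addr0.
  - by have := map_inj_uniq (mulfI c0) [:: 0; 1; a; a + 1]; rewrite uniq01a /= mulr0 mulr1.
  - by move=> i _; rewrite mem_head.
  by exists N, D; split => // x /D_eig; rewrite subr0.
(* One lambda equal to a and 2k - 1 equal to a + 1 sum to 1 in characteristic 2. *)
have [|||N [D [BND NN D_diag D_eig]]] := non_derogative_square_zero_split hn (b := b)
    (x1 := 1) (lambda := fun i => if i == 0%N then a else a + 1) (rs := [:: a; a + 1]) hB.
- rewrite raddfB /= trB mxtrace_scalar (_ : (4 * k).+2 = 2 * (2 * k).+1)%N; last by lia.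
  rewrite mulrn_pchar2_double // subrr -(prednK (_ : 0 < 2 * k)%N) ?muln_gt0 //.
  rewrite big_ord_recl /= sumr_const card_ord addrA [1 + a]addrC -mulrS.
  by rewrite prednK ?muln_gt0 // mulrn_pchar2_double.
- by [].
- by move=> i _; case: (i == 0%N); rewrite !inE eqxx ?orbT.
exists N, D; split => // x /D_eig.
by rewrite !inE !subr_eq add0r ![_ + b]addrC addrA.
Qed.
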